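(* Let $m<n$ be positive integers and let $x_{i,j}\in[-1,1]$ for $i\in[m]$, $j\in[n]$. Then for any $a\in\mathbb{R}^m$ there exists a subset $S\subseteq[n]$ with $|S|\le m$ such that \[\Big|\sum_{i=1}^m a_i\prod_{j\in S}x_{i,j}\Big|\ge\frac{1}{4^m}\left(\frac1n\right)^{m(m+1)}\Big|\sum_{i=1}^m a_i\prod_{j=1}^n x_{i,j}\Big|.\]
   Context: An empty product equals $1$. *)

From mathcomp Require Import all_boot all_order all_algebra.
From mathcomp Require Import all_classical all_reals.
Set Implicit Arguments. Unset Strict Implicit. Unset Printing Implicit Defensive.

From mathcomp Require Import all_boot all_order all_algebra.
From mathcomp Require Import all_classical all_reals.
(* Re-imported so that [set0], [subsetP], ... denote the finset notions again,
   not their classical_sets namesakes. *)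
From mathcomp Require Import fintype finset zify.
Import Order.TTheory GRing.Theory Num.Theory.
Set Implicit Arguments. Unset Strict Implicit. Unset Printing Implicit Defensive.

(* Write Phi(T) = sum_i a_i prod_(j in T) x_ij. Split T into m classes C_1, ..., C_m
   of size at least |T|/m (rounded down) and put y_l = prod_(j in C_l) x_lj. Summing
   a_i times the expansion of prod_l (prod_(j in C_l) x_ij - y_l) = 0, whose factor
   l = i vanishes, gives sum_(J subset [m]) prod_(l in J) (-y_l) Phi(T minus C_J) = 0.
   So Phi(T) is a combination of fewer than 2^m values Phi(T minus C_J), J nonempty,
   with coefficients of modulus at most 1, and |Phi(T)| <= 2^m |Phi(T')| for some T'
   with |T'| <= |T| - |T|/m. Iterating until |T| <= m, the potential
   (|T| - m + 1)^(m^2) drops by a factor 2^m at each step because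
   ((m - 1)/m)^m <= 1/2; its initial value (n - m + 1)^(m^2) bounds the total loss. *)

Section Labelling.
Variable X : finType.

Lemma exists_subset_card (A : {set X}) k :
  k <= #|A| -> exists2 B : {set X}, B \subset A & #|B| = k.
Proof.
elim: k => [|k IH] le_kA; first by exists set0; rewrite ?sub0set ?cards0.
have [B BA cardB] := IH (ltnW le_kA).
have : 0 < #|A :\: B| by rewrite cardsD (setIidPr BA) cardB subn_gt0.
case/card_gt0P => j; rewrite inE => /andP[jNB jA].
exists (j |: B); first by rewrite subUset sub1set jA BA.
by rewrite cardsU1 jNB cardB.
Qed.

Lemma exists_labelling (L : finType) (l0 : L) (A : {set X}) (B : {set L}) q :
  #|B| * q <= #|A| ->
  exists lab : X -> L, forall l, l \in B -> q <= #|[set j in A | lab j == l]|.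
Proof.
have [k] := ubnP #|B|; elim: k A B => // k IH A B ltBk leBA.
case: (set_0Vmem B) => [-> | [l lB]]; first by exists (fun=> l0) => l; rewrite inE.
rewrite (cardsD1 l B) lB in ltBk leBA.
have [G GA cardG] : exists2 G : {set X}, G \subset A & #|G| = q.
  by apply: exists_subset_card; rewrite mulSn in leBA; lia.
have [|lab labP] := IH (A :\: G) (B :\ l) ltBk.
  by rewrite (cardsD A) (setIidPr GA) cardG; rewrite mulSn in leBA; lia.
exists (fun j => if j \in G then l else lab j) => l' l'B.
have [-> | l'Nl] := eqVneq l' l.
  rewrite -cardG; apply: subset_leq_card; apply/subsetP => j jG.
  by rewrite inE (subsetP GA _ jG) jG eqxx.
apply: leq_trans (labP l' _) _; first by rewrite !inE l'Nl.
apply: subset_leq_card; apply/subsetP => j; rewrite !inE => /andP[/andP[jNG jA] labj].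
by rewrite jA (negbTE jNG).
Qed.

End Labelling.

Lemma bernoulli_expn b n : b ^ n.+1 + n.+1 * b ^ n <= b.+1 ^ n.+1.
Proof.
elim: n => [|n IH]; first by rewrite !expn1 expn0 muln1 addn1.
rewrite (expnS b.+1) (expnS b n.+1) (expnS b n).
have := leq_mul (leqnn b.+1) IH; rewrite (expnS b n); nia.
Qed.

Lemma leq_double_expn_pred k : 0 < k -> 2 * k.-1 ^ k <= k ^ k.
Proof.
case: k => // k _; have := bernoulli_expn k k; rewrite /= expnS; nia.
Qed.

Lemma descent_potential_le k t t' : 0 < k -> k < t -> t' <= t - t %/ k ->
  2 ^ k * (t' - k).+1 ^ (k * k) <= (t - k).+1 ^ (k * k).
Proof.
move=> k_gt0 lt_kt le_t't.
have [le_t'k | lt_kt'] := leqP t' k.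
  rewrite (_ : t' - k = 0); last by apply/eqP; rewrite subn_eq0.
  rewrite exp1n muln1 expnM leq_exp2r //.
  apply: leq_trans (_ : 2 <= (t - k).+1) _; first lia.
  by rewrite -{1}(expn1 (t - k).+1) leq_pexp2l.
have [k1_gt0 shrink] : 0 < k.-1 /\ k * (t' - k).+1 <= k.-1 * (t - k).+1.
  by have := divn_eq t k; have := ltn_pmod t k_gt0; nia.
have halve : 2 * (t' - k).+1 ^ k <= (t - k).+1 ^ k.
  rewrite -(leq_exp2r _ _ k_gt0) !expnMn in shrink.
  have := leq_double_expn_pred k_gt0.
  rewrite -(@leq_pmul2l (k.-1 ^ k)) ?expn_gt0 ?k1_gt0 //; nia.
by rewrite !expnM -expnMn leq_exp2r.
Qed.

Local Open Scope ring_scope.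

Section ProductSums.
Variables (R : comNzRingType) (I X : finType) (a : I -> R) (x : I -> X -> R).

Definition prodsum (T : {set X}) := \sum_i a i * \prod_(j in T) x i j.

Lemma prodsum_linear_relation (L : finType) (T : {set X}) (lab : X -> L) (y : L -> R) :
  (forall i, exists l, y l = \prod_(j in T | lab j == l) x i j) ->
  \sum_(J : {set L}) (\prod_(l in J) - y l) * prodsum [set j in T | lab j \notin J]
    = 0.
Proof.
move=> hy; under eq_bigr do rewrite mulr_sumr.
rewrite exchange_big /=; apply: big1 => i _.
have [li yli] := hy i.
transitivity (a i * \prod_l (- y l + \prod_(j in T | lab j == l) x i j)); last first.
  by rewrite (bigD1 li) //= yli addNr mul0r mulr0.
rewrite bigA_distr mulr_sumr; apply: eq_bigr => J _.
rewrite mulrCA; congr (_ * _).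
rewrite [RHS](bigID (mem J)) /=; congr (_ * _); first by apply: eq_bigr => l ->.
rewrite (partition_big lab (fun l => l \notin J)) /=; last first.
  by move=> j; rewrite inE => /andP[].
apply: eq_big => // l lNJ; rewrite (negbTE lNJ).
apply: eq_bigl => j; rewrite !inE.
by case: (lab j =P l) => [-> | _]; rewrite ?lNJ ?andbT ?andbF.
Qed.

End ProductSums.

Lemma exists_norm_sum_le_card (R : realDomainType) (J : finType) (P : {pred J})
    (F : J -> R) (j0 : J) :
  j0 \in P -> exists2 j, j \in P & `|\sum_(j in P) F j| <= #|P|%:R * `|F j|.
Proof.
move=> Pj0; case: (arg_maxP (fun j => `|F j|) Pj0) => j Pj maxj.
exists j => //; apply: le_trans (ler_norm_sum _ _ _) _.
rewrite mulr_natl -sumr_const; apply: ler_sum => i Pi; exact: maxj.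
Qed.

Section Descent.
Variables (R : realDomainType) (I X : finType) (a : I -> R) (x : I -> X -> R).
Hypothesis x_le1 : forall i j, `|x i j| <= 1.

Lemma prodsum_descent (T : {set X}) : (0 < #|I|)%N ->
  exists2 T' : {set X}, (#|T'| <= #|T| - #|T| %/ #|I|)%N &
    `|prodsum a x T| <= (2 ^ #|I|)%:R * `|prodsum a x T'|.
Proof.
move=> I_gt0; have [i0 _] := card_gt0P I_gt0.
set q := (#|T| %/ #|I|)%N.
have qI_le : (#|[set: I]| * q <= #|T|)%N by rewrite cardsT mulnC leq_divM.
have [lab labP] := exists_labelling i0 qI_le.
pose y l := \prod_(j in T | lab j == l) x l j.
pose T_ (J : {set I}) := [set j in T | lab j \notin J].
pose term (J : {set I}) := (\prod_(l in J) - y l) * prodsum a x (T_ J).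
have sum_term0 : \sum_J term J = 0 by apply: prodsum_linear_relation => i; exists i.
have T_0 : T_ set0 = T by apply/setP => j; rewrite !inE andbT.
have term0 : term set0 = prodsum a x T by rewrite /term big_set0 mul1r T_0.
have prodsumT : prodsum a x T = - \sum_(J | J != set0) term J.
  by move: sum_term0; rewrite (bigD1 set0) //= term0 => /eqP; rewrite addr_eq0 => /eqP.
have card_nonempty : (#|[pred J : {set I} | J != set0]| <= 2 ^ #|I|)%N.
  rewrite -cardsT -card_powerset; apply: leq_trans (max_card _) _.
  by apply/eq_leq/eq_card => J; rewrite powersetE subsetT.
have setT_neq0 : [set: I] != set0 by apply/set0Pn; exists i0.
have [J J0 termJ] := @exists_norm_sum_le_card _ _ [pred J | J != set0] term _ setT_neq0.
have norm_prod_le1 : `|\prod_(l in J) - y l| <= 1.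
  rewrite normr_prod; apply: prodr_ile1 => l _; rewrite normr_ge0 normrN normr_prod.
  by apply: prodr_ile1 => j _; rewrite normr_ge0 x_le1.
rewrite inE in J0; case/set0Pn: J0 => l lJ.
exists (T_ J).
  have sub : T_ J \subset T :\: [set j in T | lab j == l].
    apply/subsetP => j; rewrite !inE => /andP[jT labjNJ]; rewrite jT andbT.
    by apply: contra labjNJ => /eqP ->.
  apply: leq_trans (subset_leq_card sub) _.
  rewrite (cardsD T) (setIidPr _); last by apply/subsetP => j; rewrite inE => /andP[].
  by have := labP l (in_setT l); lia.
rewrite prodsumT normrN; apply: le_trans termJ _.
by rewrite ler_pM ?ler_nat // normrM ler_piMl.
Qed.

Lemma prodsum_le_small_subset (T : {set X}) : (0 < #|I|)%N ->
  exists2 S : {set X}, (#|S| <= #|I|)%N &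
    `|prodsum a x T| <= ((#|T| - #|I|).+1 ^ (#|I| * #|I|))%:R * `|prodsum a x S|.
Proof.
move=> I_gt0; have [s] := ubnP #|T|; elim: s T => // s IH T ltTs.
have [le_TI | lt_IT] := leqP #|T| #|I|.
  exists T => //.
  by rewrite (_ : (#|T| - #|I| = 0)%N) ?exp1n ?mul1r //; apply/eqP; rewrite subn_eq0.
have [T' le_T'T descT] := prodsum_descent T I_gt0.
have q_gt0 : (0 < #|T| %/ #|I|)%N by rewrite divn_gt0 // ltnW.
have [|S le_SI leS] := IH T'; first lia.
exists S => //; apply: le_trans descT _.
apply: le_trans (ler_wpM2l _ leS) _ => //.
by rewrite mulrA -natrM ler_wpM2r // ler_nat descent_potential_le.
Qed.

End Descent.

Theorem lemma2 (R : realType) (m n : nat) (hm : (0 < m)%N) (hmn : (m < n)%N)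
  (x : 'I_m -> 'I_n -> R)
  (hx : forall i j, -1 <= x i j <= 1)
  (a : 'I_m -> R) :
  exists S : {set 'I_n}, (#|S| <= m)%N /\
    `| \sum_(i < m) a i * \prod_(j in S) x i j |
      >= (4 ^+ m)^-1 * ((n%:R)^-1) ^+ (m * m.+1)
         * `| \sum_(i < m) a i * \prod_(j < n) x i j |.
Proof.
have x_le1 i j : `|x i j| <= 1 by rewrite ler_norml hx.
have I_gt0 : (0 < #|'I_m|)%N by rewrite card_ord.
have [S le_Sm leS] := prodsum_le_small_subset a x_le1 [set: 'I_n] I_gt0.
rewrite !card_ord cardsT card_ord in le_Sm leS.
exists S; split => //.
have -> : \sum_(i < m) a i * \prod_(j < n) x i j = prodsum a x [set: 'I_n].
  by apply: eq_bigr => i _; apply: congr1; apply: eq_bigl => j; rewrite in_setT.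
have const_le : ((n - m).+1 ^ (m * m))%:R <= 4 ^+ m * n%:R ^+ (m * m.+1) :> R.
  rewrite -!natrX -natrM ler_nat.
  apply: leq_trans (leq_pmull _ _) => //; last by rewrite expn_gt0.
  apply: (@leq_trans (n ^ (m * m))); first by rewrite leq_exp2r ?muln_gt0 ?hm //; lia.
  by rewrite leq_pexp2l ?(ltn_trans hm hmn) // leq_mul.
rewrite exprVn -invfM ler_pdivrMl ?mulr_gt0 ?exprn_gt0 ?ltr0n ?(ltn_trans hm hmn) //.
by apply: le_trans leS _; rewrite ler_wpM2r.
Qed.
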